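(* Under the assumptions of Lemma 6.4 stated below, suppose in addition that $\sup_n\|I_n\mathbf K\|_{L^{\infty,1}(\Omega^2)}<+\infty$. Then $\sup_{t\in[0,T],n\in\mathbb N}\|\tilde u_n(\cdot,t)-\bar u_n(\cdot,t)\|_{L^2(\Omega)}\le C\tau$, where $C>0$ does not depend on $(n,N,T)$. Assumptions of Lemma 6.4: $p\in]1,2]$; for each $n$, $\mathbf u^k$ is given by the explicit scheme $\frac{\mathbf u^k-\mathbf u^{k-1}}{\tau_{k-1}}=-\Delta_p^{\mathbf K}\mathbf u^{k-1}+\mathbf f$, $\mathbf u^0=\mathbf g$, with step sizes $\tau_k\le2C_n\|\Delta_p^{I_n\mathbf K}u_n^k-f_n\|_{L^2}^{\frac{2-p}{p-1}}$, $u_n^k=I_n\mathbf u^k$, $f_n=I_n\mathbf f$, $C_n=2^{\frac{p-2}{2(p-1)}}(C_2^{1/2}\|I_n\mathbf K\|_{L^{\infty,1}(\Omega^2)})^{\frac1{1-p}}(1-1/p)$, $C_2=\max(2^{2-p},(p-1)2^{2-p},1)$; $I_n\mathbf g\in L^2(\Omega)$; $I_n\mathbf K$ nonnegative, measurable, symmetric with $\sup_x\int I_n\mathbf K(x,y)dy<\infty$; for each $n$ there is $\mathbf u^\star$ with $\Delta_p^{\mathbf K}\mathbf u^\star=\mathbf f$ and $\sup_n\|I_n\mathbf g-I_n\mathbf u^\star\|_{L^2}<\infty$.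
   Context: $d\ge1$, $\Omega=[0,1]^d$, hypercubic cells $\Omega^n_{\mathbf i}$ of measures $h_{\mathbf i}$, $I_n$ the piecewise-constant injector. $\Psi(s)=|s|^{p-2}s$; $(\Delta_p^{\mathbf K}\mathbf u)_{\mathbf i}=-\sum_{\mathbf j}h_{\mathbf j}\mathbf K_{\mathbf i\mathbf j}\Psi(\mathbf u_{\mathbf j}-\mathbf u_{\mathbf i})$ and $\Delta_p^Ku(x)=-\int_\Omega K(x,y)\Psi(u(y)-u(x))dy$. Time partition $0=t_0<\dots<t_N=T$, $\tau_{k-1}=t_k-t_{k-1}$, $\tau=\max_k\tau_{k-1}$. $\tilde u_n(x,t)=\frac{t_k-t}{\tau_{k-1}}u_n^{k-1}(x)+\frac{t-t_{k-1}}{\tau_{k-1}}u_n^k(x)$ and $\bar u_n(x,t)=u_n^{k-1}(x)$ for $t\in]t_{k-1},t_k]$. $\|F\|_{L^{\infty,1}(\Omega^2)}=\sup_x\int|F(x,y)|dy$. *)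

From mathcomp Require Import all_boot all_order all_algebra.
From mathcomp Require Import reals exp.
Set Implicit Arguments. Unset Strict Implicit. Unset Printing Implicit Defensive.
Import Order.TTheory GRing.Theory Num.Theory.
Local Open Scope ring_scope.

Section Defs.
Variable R : realType.

Definition Psi (p s : R) : R := (`|s| `^ (p - 2)) * s.

(* Discrete nonlocal p-Laplacian on m cells of measures h:
   (Delta_p^K u)_i = - sum_j h_j K_ij Psi(u_j - u_i).
   For piecewise constant functions this is exactly Delta_p^{I_n K} (I_n u). *)
Definition plap (p : R) (m : nat) (h : 'I_m -> R) (K : 'I_m -> 'I_m -> R)
  (u : 'I_m -> R) : 'I_m -> R :=
  fun i => - \sum_(j < m) h j * K i j * Psi p (u j - u i).

(* L^2(Omega) norm of the piecewise constant function I_n v *)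
Definition l2norm (m : nat) (h : 'I_m -> R) (v : 'I_m -> R) : R :=
  Num.sqrt (\sum_(i < m) h i * v i ^+ 2).

(* ||I_n K||_{L^{infty,1}(Omega^2)} = sup_x int |I_n K(x,y)| dy
   = max_i sum_j h_j |K_ij| *)
Definition kernel_norm (m : nat) (h : 'I_m -> R) (K : 'I_m -> 'I_m -> R) : R :=
  \big[Num.max/0]_(i < m) \sum_(j < m) h j * `|K i j|.

Definition tau (t : nat -> R) (k : nat) : R := t k.+1 - t k.

Definition taumax (t : nat -> R) (N : nat) : R :=
  \big[Num.max/0]_(k < N) tau t k.

Fixpoint scheme (p : R) (m : nat) (h : 'I_m -> R) (K : 'I_m -> 'I_m -> R)
  (f g : 'I_m -> R) (t : nat -> R) (k : nat) : 'I_m -> R :=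
  match k with
  | 0 => g
  | k'.+1 => fun i => scheme p h K f g t k' i
                + tau t k' * (- plap p h K (scheme p h K f g t k') i + f i)
  end.

Definition C2 (p : R) : R :=
  Num.max (2 `^ (2 - p)) (Num.max ((p - 1) * 2 `^ (2 - p)) 1).

Definition Cn (p Kn : R) : R :=
  2 `^ ((p - 2) / (2 * (p - 1))) * (Num.sqrt (C2 p) * Kn) `^ (1 / (1 - p))
  * (1 - 1 / p).

(* linear interpolant tilde u_n(., s) on ]t_k, t_{k+1}] *)
Definition u_tilde {m : nat} (u : nat -> 'I_m -> R) (t : nat -> R) (k : nat) (s : R)
  : 'I_m -> R :=
  fun i => (t k.+1 - s) / tau t k * u k i + (s - t k) / tau t k * u k.+1 i.

(* piecewise constant bar u_n(., s) = u^k on ]t_k, t_{k+1}] *)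
Definition u_bar {m : nat} (u : nat -> 'I_m -> R) (k : nat) : 'I_m -> R := u k.

End Defs.

From mathcomp Require Import all_boot all_order all_algebra.
From mathcomp Require Import reals exp.
From mathcomp Require Import ring lra.
Import Order.TTheory GRing.Theory Num.Theory.
Local Open Scope ring_scope.
Set Implicit Arguments. Unset Strict Implicit. Unset Printing Implicit Defensive.

(* Between t_k and t_{k+1} the interpolants differ by (s - t_k) times the
   residual D = Delta_p^K u^k - f = Delta_p^K u^k - Delta_p^K u*, so it is enough
   to bound |D|_2 uniformly.  As Psi is (p-1)-Hoelder, |D|_2^2 is controlled by
   |K|^2 (1 + |u^k - u*|_2^2), and it remains to see that the explicit scheme never
   increases |u^k - u*|_2.  Expanding the square, a step contracts iff
   tau_k |D|_2^2 <= 2 <u^k - u*, D>.  The pairing is a sum over edges of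
   (Psi a - Psi b)(a - b) >= 2^((p-2)/(p-1)) |Psi a - Psi b|^(p/(p-1)), which by
   Jensen dominates a power of the flux energy E, while Cauchy-Schwarz gives
   |D|_2^2 <= |K| E; the step-size restriction is exactly what makes the two
   powers of E match. *)

Section PowerInequalities.
Variable R : realType.
Implicit Types a m s x y : R.

(* Young's inequality for x and m^(a-1) with the conjugate exponent a/(a-1). *)
Lemma powR_tangent_le a m x : 1 <= a -> 0 <= m -> 0 <= x ->
  m `^ a + a * m `^ (a - 1) * (x - m) <= x `^ a.
Proof.
move=> a1 m0 x0.
have [->|a_neq1] := eqVneq a 1.
  by rewrite subrr powRr0 !powRr1 //; lra.
have a0 : 0 < a by lra.
have a1' : 0 < a - 1 by rewrite subr_gt0 lt_neqAle eq_sym a_neq1.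
pose q := a / (a - 1).
have conj_aq : a^-1 + q^-1 = 1.
  by rewrite /q invf_div -{1}(div1r a) -mulrDl subrKC mulfV // gt_eqF.
have := conjugate_powR x0 (powR_ge0 m (a - 1)) a0 (divr_gt0 a0 a1') conj_aq.
rewrite -powRrM /q mulrCA mulfV ?mulr1 ?gt_eqF // => young.
have := ler_wpM2l (ltW a0) young.
have -> : a * (x `^ a / a + m `^ a / (a / (a - 1))) = x `^ a + (a - 1) * m `^ a.
  by field; rewrite !gt_eqF.
rewrite -(mulr_powRB1 m0 a0); lra.
Qed.

(* The convex case for the exponent 1/s, at the points x^s and m^s. *)
Lemma powR_tangent_ge s m x : 0 < s <= 1 -> 0 < m -> 0 <= x ->
  x `^ s <= m `^ s + s * m `^ (s - 1) * (x - m).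
Proof.
move=> /andP[s0 s1] m0 x0.
have s_neq0 : s != 0 by rewrite gt_eqF.
have a1 : 1 <= s^-1 by rewrite invf_ge1.
have := powR_tangent_le a1 (powR_ge0 m s) (powR_ge0 x s).
rewrite -!powRrM !mulfV // !powRr1 ?(ltW m0) //.
have -> : s * (s^-1 - 1) = 1 - s by field.
have k : 0 < s * m `^ (s - 1) by rewrite mulr_gt0 ?powR_gt0.
move=> /(ler_wpM2l (ltW k)).
have -> : s * m `^ (s - 1) * (m + s^-1 * m `^ (1 - s) * (x `^ s - m `^ s))
        = s * m `^ (s - 1) * m + (m `^ (s - 1) * m `^ (1 - s)) * (x `^ s - m `^ s).
  by field.
have -> : m `^ (s - 1) * m `^ (1 - s) = 1.
  rewrite -powRD; last by apply/implyP => _; rewrite gt_eqF.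
  have -> : s - 1 + (1 - s) = 0 by ring.
  exact: powRr0.
lra.
Qed.

Lemma powR_subadd s x y : 0 < s <= 1 -> 0 <= x -> 0 <= y ->
  (x + y) `^ s <= x `^ s + y `^ s.
Proof.
move=> /andP[s0 s1] x0 y0.
have [xy0|xy_gt0] := leP (x + y) 0.
  have [-> ->] : x = 0 /\ y = 0 by split; lra.
  by rewrite addr0 powR0 ?gt_eqF // addr0.
have share z : 0 <= z <= x + y -> z / (x + y) * (x + y) `^ s <= z `^ s.
  move=> /andP[z0 zT].
  have zTs : z / (x + y) <= (z / (x + y)) `^ s.
    have [->|z_neq0] := eqVneq z 0; first by rewrite mul0r powR_ge0.
    apply: ger1_powR => //.
    by rewrite divr_gt0 ?ler_pdivrMr ?mul1r //= lt_neqAle eq_sym z_neq0.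
  have -> : z `^ s = (z / (x + y)) `^ s * (x + y) `^ s.
    by rewrite -powRM ?divfK ?gt_eqF // ?divr_ge0 // ltW.
  by rewrite ler_wpM2r // powR_ge0.
have -> : (x + y) `^ s = x / (x + y) * (x + y) `^ s + y / (x + y) * (x + y) `^ s.
  by field; rewrite gt_eqF.
by apply: lerD; apply: share; lra.
Qed.

Lemma powR_add_le s x y : 0 < s <= 1 -> 0 <= x -> 0 <= y ->
  x `^ s + y `^ s <= 2 `^ (1 - s) * (x + y) `^ s.
Proof.
move=> s01 x0 y0; have /andP[s0 s1] := s01.
have [xy0|xy_gt0] := leP (x + y) 0.
  have [-> ->] : x = 0 /\ y = 0 by split; lra.
  by rewrite addr0 !powR0 ?gt_eqF // addr0 mulr0.
have m0 : 0 < (x + y) / 2 by rewrite divr_gt0.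
have midpoint : 2 `^ (1 - s) * (x + y) `^ s = 2 * ((x + y) / 2) `^ s.
  have half0 : (0 : R) <= 2^-1 by rewrite invr_ge0.
  rewrite powRM ?(ltW xy_gt0) // -powR_inv1 // -powRrM mulN1r mulrCA.
  rewrite -[X in X * 2 `^ _]powRr1 // -powRD; first by rewrite mulrC.
  by apply/implyP => _; rewrite pnatr_eq0.
rewrite midpoint.
have := powR_tangent_ge s01 m0 x0; have := powR_tangent_ge s01 m0 y0.
lra.
Qed.

(* Jensen's inequality for weights of total mass at most M, obtained by summing
   the tangent inequality at the weighted mean c; the excess mass only helps since
   a >= 1. *)
Lemma sum_powR_ge (I : finType) (mu X : I -> R) a M :
  1 <= a -> 0 < M -> (forall i, 0 <= mu i) -> \sum_i mu i <= M ->
  (forall i, 0 <= X i) ->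
  M * ((\sum_i mu i * X i) / M) `^ a <= \sum_i mu i * X i `^ a.
Proof.
move=> a1 M0 mu0 muM X0.
set W := \sum_i mu i; set S := \sum_i mu i * X i; set c := S / M.
have c0 : 0 <= c by rewrite divr_ge0 ?sumr_ge0 ?ltW // => i _; rewrite mulr_ge0.
have S_eq : S = c * M by rewrite /c divfK ?gt_eqF.
have ca : c `^ a = c * c `^ (a - 1) by rewrite mulr_powRB1 ?(lt_le_trans ltr01 a1).
apply: le_trans (ler_sum _ (fun i _ => ler_wpM2l (mu0 i) (powR_tangent_le a1 c0 (X0 i)))).
set P := c `^ (a - 1) in ca *.
have -> : \sum_i mu i * (c `^ a + a * P * (X i - c))
    = c `^ a * W + a * P * S - a * P * c * W.
  transitivity (\sum_i (c `^ a * mu i + a * P * (mu i * X i) - a * P * c * mu i)).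
    by apply: eq_bigr => i _; ring.
  by rewrite sumrB big_split /= -!mulr_sumr.
have gap : 0 <= (a - 1) * (c `^ a * (M - W)).
  by rewrite !mulr_ge0 ?powR_ge0 ?subr_ge0 //.
rewrite S_eq ca in gap *; lra.
Qed.

Lemma sum_mul_sqr_le (I : finType) (a b : I -> R) : (forall i, 0 <= a i) ->
  (\sum_i a i * b i) ^+ 2 <= (\sum_i a i) * \sum_i a i * b i ^+ 2.
Proof.
move=> a0.
set A := \sum_i a i; set B := \sum_i a i * b i; set C := \sum_i a i * b i ^+ 2.
have A0 : 0 <= A by rewrite sumr_ge0.
have [A_eq0|A_gt0] := eqVneq A 0.
  have a_eq0 i : a i = 0.
    by move/eqP: A_eq0; rewrite psumr_eq0 // => /allP/(_ i (mem_index_enum i))/eqP.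
  by rewrite /B big1 ?expr0n ?A_eq0 ?mul0r // => i _; rewrite a_eq0 mul0r.
have : 0 <= \sum_i a i * (A * b i - B) ^+ 2.
  by rewrite sumr_ge0 // => i _; rewrite mulr_ge0 ?sqr_ge0.
have -> : \sum_i a i * (A * b i - B) ^+ 2 = A * (A * C - B ^+ 2).
  transitivity (\sum_i (A ^+ 2 * (a i * b i ^+ 2) + (- (2 * A * B)) * (a i * b i)
                        + B ^+ 2 * a i)).
    by apply: eq_bigr => i _; ring.
  by rewrite !big_split /= -!mulr_sumr -/A -/B -/C; ring.
by rewrite pmulr_rge0 ?subr_ge0 // lt_neqAle eq_sym A_gt0.
Qed.
End PowerInequalities.

Section Psi.
Variables (R : realType) (p : R).
Hypothesis p12 : 1 < p <= 2.

Lemma PsiN s : Psi p (- s) = - Psi p s.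
Proof. by rewrite /Psi normrN mulrN. Qed.

Lemma Psi_nneg s : 0 <= s -> Psi p s = s `^ (p - 1).
Proof.
move=> s0; rewrite /Psi ger0_norm // mulrC.
have -> : p - 2 = (p - 1) - 1 by ring.
by rewrite mulr_powRB1 // subr_gt0; case/andP: p12.
Qed.

Lemma Psi_npos s : s <= 0 -> Psi p s = - (- s) `^ (p - 1).
Proof. by move=> s0; rewrite -[s]opprK PsiN opprK Psi_nneg // oppr_ge0. Qed.

Lemma Psi_nondecreasing : {homo Psi p : a b / a <= b}.
Proof.
have p1 : 0 <= p - 1 by case/andP: p12 => *; lra.
move=> a b ab; have [a0|a0] := leP 0 a.
  by rewrite !Psi_nneg ?(le_trans a0) // ge0_ler_powR // nnegrE (le_trans a0).
have [b0|b0] := leP 0 b.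
  rewrite (Psi_nneg b0) (Psi_npos (ltW a0)).
  by have := powR_ge0 (- a) (p - 1); have := powR_ge0 b (p - 1); lra.
rewrite (Psi_npos (ltW a0)) (Psi_npos (ltW b0)) lerN2.
by rewrite ge0_ler_powR // ?nnegrE; lra.
Qed.

Lemma Psi_hoelder a b : `|Psi p a - Psi p b| <= 2 `^ (2 - p) * `|a - b| `^ (p - 1).
Proof.
have /andP[p1 p2] := p12.
have s01 : 0 < p - 1 <= 1 by apply/andP; split; lra.
have two_ge1 : 1 <= 2 `^ (2 - p).
  by rewrite -[X in X <= _](powRr0 2); apply: ler_powR; lra.
wlog ba : a b / b <= a.
  move=> H; have [|/ltW] := leP b a; first exact: H.
  by rewrite distrC (distrC a); apply: H.
have ab0 : 0 <= a - b by rewrite subr_ge0.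
rewrite (ger0_norm ab0) ger0_norm ?subr_ge0 ?Psi_nondecreasing //.
have powR_ab0 := powR_ge0 (a - b) (p - 1).
have [b0|b0] := leP 0 b.
  rewrite (Psi_nneg (le_trans b0 ba)) (Psi_nneg b0).
  have := powR_subadd s01 b0 ab0; rewrite subrKC => H.
  by apply: le_trans (ler_peMl powR_ab0 two_ge1); lra.
have [a0|a0] := leP a 0.
  rewrite (Psi_npos a0) (Psi_npos (ltW b0)).
  have a0' : 0 <= - a by rewrite oppr_ge0.
  have := powR_subadd s01 a0' ab0.
  have -> : - a + (a - b) = - b by ring.
  move=> H.
  by apply: le_trans (ler_peMl powR_ab0 two_ge1); lra.
rewrite (Psi_nneg (ltW a0)) (Psi_npos (ltW b0)).
have b0' : 0 <= - b by rewrite oppr_ge0 ltW.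
have := powR_add_le s01 (ltW a0) b0'.
have -> : 1 - (p - 1) = 2 - p by ring.
by rewrite opprK.
Qed.

Lemma Psi_sub_mul_ge a b :
  2 `^ ((p - 2) / (p - 1)) * ((Psi p a - Psi p b) ^+ 2) `^ (p / (2 * (p - 1)))
  <= (Psi p a - Psi p b) * (a - b).
Proof.
have /andP[p1 p2] := p12.
have p1_neq0 : p - 1 != 0 by rewrite subr_eq0 gt_eqF.
have ip0 : 0 <= 1 / (p - 1) by rewrite divr_ge0 // subr_ge0 ltW.
set P := Psi p a - Psi p b; set d := a - b.
have PdE : P * d = `|P| * `|d|.
  rewrite -normrM ger0_norm //.
  have [ba|/ltW ab] := leP b a.
    by rewrite mulr_ge0 // subr_ge0 ?Psi_nondecreasing.
  by rewrite mulr_le0 // subr_le0 ?Psi_nondecreasing.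
have PE : (P ^+ 2) `^ (p / (2 * (p - 1))) = `|P| * `|P| `^ (1 / (p - 1)).
  rewrite -real_normK ?num_real // -powR_mulrn // -powRrM.
  have -> : 2%:R * (p / (2 * (p - 1))) = 1 + 1 / (p - 1) by field.
  rewrite powRD ?powRr1 // (gt_eqF (_ : 0 < 1 + 1 / (p - 1))) //; lra.
have hoelder : `|P| `^ (1 / (p - 1)) <= 2 `^ ((2 - p) / (p - 1)) * `|d|.
  have := ge0_ler_powR ip0 (normr_ge0 P) _ (Psi_hoelder a b).
  rewrite !nnegrE powRM ?powR_ge0 // -!powRrM mul1r mulfV // powRr1 //.
  by apply; rewrite mulr_ge0 ?powR_ge0.
have cancel2 : 2 `^ ((p - 2) / (p - 1)) * 2 `^ ((2 - p) / (p - 1)) = 1.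
  rewrite -powRD; last by apply/implyP => _; rewrite pnatr_eq0.
  by rewrite -mulrDl addrC subrKA subrr mul0r powRr0.
rewrite PdE PE mulrCA; apply: ler_wpM2l => //.
apply: le_trans (ler_wpM2l (powR_ge0 _ _) hoelder) _.
by rewrite mulrA cancel2 mul1r.
Qed.

Lemma Psi_sub_sqr_le a b : (Psi p a - Psi p b) ^+ 2 <= 8 * (1 + (a - b) ^+ 2).
Proof.
have /andP[p1 p2] := p12.
have s01 : 0 < p - 1 <= 1 by apply/andP; split; lra.
have d0 := normr_ge0 (a - b).
have two_le2 : 2 `^ (2 - p) <= 2.
  by rewrite -[X in _ <= X](powRr1 (ler0n _ 2)); apply: ler_powR; lra.
have dpow : `|a - b| `^ (p - 1) <= 1 + `|a - b|.
  by have := powR_tangent_ge s01 ltr01 d0; rewrite powR1; nra.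
have HP : `|Psi p a - Psi p b| <= 2 * (1 + `|a - b|).
  by apply: le_trans (Psi_hoelder a b) _; apply: ler_pM; rewrite ?powR_ge0.
rewrite -[_ ^+ 2]real_normK ?num_real // -[(a - b) ^+ 2]real_normK ?num_real //.
have := normr_ge0 (Psi p a - Psi p b); have := sqr_ge0 (`|a - b| - 1); nra.
Qed.
End Psi.

Section StepSize.
Variable R : realType.
Implicit Types p Kn : R.

Lemma Cn0 p : 1 < p -> Cn p 0 = 0.
Proof.
move=> p1; rewrite /Cn mulr0 powR0 ?mulr0 ?mul0r //.
by rewrite div1r invr_eq0 subr_eq0 lt_eqF.
Qed.

Lemma C2E p : 1 < p <= 2 -> C2 p = 2 `^ (2 - p).
Proof.
move=> /andP[p1 p2].
have two_ge1 : 1 <= 2 `^ (2 - p).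
  by rewrite -[X in X <= _](powRr0 2); apply: ler_powR; lra.
have : (p - 1) * 2 `^ (2 - p) <= 2 `^ (2 - p).
  by rewrite ler_piMl ?powR_ge0 //; lra.
by rewrite /C2 => ?; rewrite max_l // ge_max; apply/andP.
Qed.

(* 2 C_n is the reciprocal of the coercivity constant of [plapB_pairing_ge], up to
   the factor 2 (1 - 1/p) <= 1. *)
Lemma Cn_mul_powR_le p Kn : 1 < p <= 2 -> 0 < Kn ->
  2 * Cn p Kn * Kn `^ (1 / (p - 1)) <= 2 `^ ((p - 2) / (p - 1)).
Proof.
move=> p12 Kn0; have /andP[p1 p2] := p12.
have p1_neq0 : p - 1 != 0 by rewrite subr_eq0 gt_eqF.
have p1_neq0' : 1 - p != 0 by rewrite subr_eq0 lt_eqF.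
rewrite /Cn C2E // -powR12_sqrt ?powR_ge0 // -powRrM powRM ?powR_ge0 ?(ltW Kn0) // -powRrM.
set c := 2 `^ ((p - 2) / (p - 1)).
have Kn_cancel : Kn `^ (1 / (1 - p)) * Kn `^ (1 / (p - 1)) = 1.
  rewrite -powRD; last by apply/implyP => _; rewrite gt_eqF.
  have -> : 1 / (1 - p) + 1 / (p - 1) = 0 by field; rewrite p1_neq0 p1_neq0'.
  exact: powRr0.
have two_pow : 2 `^ ((p - 2) / (2 * (p - 1))) * 2 `^ ((2 - p) * 2^-1 * (1 / (1 - p))) = c.
  rewrite -powRD; last by apply/implyP => _; rewrite pnatr_eq0.
  by congr (_ `^ _); field; rewrite p1_neq0 p1_neq0'.
have -> : 2 * (2 `^ ((p - 2) / (2 * (p - 1))) * (2 `^ ((2 - p) * 2^-1 * (1 / (1 - p)))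
            * Kn `^ (1 / (1 - p))) * (1 - 1 / p)) * Kn `^ (1 / (p - 1))
          = (2 * (1 - 1 / p)) * c.
  rewrite -two_pow -[X in _ = X]mulr1 -[X in _ = _ * X]Kn_cancel; ring.
rewrite ler_piMl ?powR_ge0 //.
have -> : 2 * (1 - 1 / p) = 1 - (2 - p) / p by field; rewrite gt_eqF //; lra.
by rewrite gerBl divr_ge0 //; lra.
Qed.

Lemma step_size_mul_le p Kn E Q dt : 1 < p <= 2 -> 0 < Kn -> 0 <= Q -> Q <= Kn * E ->
  0 <= dt -> dt <= 2 * Cn p Kn * Num.sqrt Q `^ ((2 - p) / (p - 1)) ->
  dt * Q <= 2 `^ ((p - 2) / (p - 1)) * (Kn * (E / Kn) `^ (p / (2 * (p - 1)))).
Proof.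
move=> p12 Kn0 Q0 QE dt0 dt_le; have /andP[p1 p2] := p12.
have p1_gt0 : 0 < p - 1 by rewrite subr_gt0.
set g := (2 - p) / (p - 1); set a := p / (2 * (p - 1)); set e := E / Kn.
have g0 : 0 <= g by rewrite /g; apply: divr_ge0; lra.
have e0 : 0 <= e.
  by rewrite /e; apply: divr_ge0; [rewrite -(pmulr_rge0 _ Kn0); exact: le_trans QE|exact: ltW].
have KnE : Kn * E = Kn ^+ 2 * e by rewrite /e; field; rewrite gt_eqF.
have sqrtQ : Num.sqrt Q `^ g <= Kn `^ g * e `^ (2^-1 * g).
  rewrite (powRrM e) -powRM ?powR_ge0 ?(ltW Kn0) //.
  apply: (ge0_ler_powR g0); rewrite ?nnegrE ?sqrtr_ge0 ?mulr_ge0 ?powR_ge0 ?(ltW Kn0) //.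
  rewrite powR12_sqrt // -[Kn]ger0_norm ?(ltW Kn0) // -sqrtr_sqr -sqrtrM ?sqr_ge0 //.
  by rewrite -KnE ler_wsqrtr.
have Cn_ge0 : 0 <= 2 * Cn p Kn.
  rewrite /Cn !mulr_ge0 ?powR_ge0 // subr_ge0 ler_pdivrMr ?mul1r; lra.
have Kn_pow : Kn `^ g * Kn ^+ 2 = Kn `^ (1 / (p - 1)) * Kn.
  rewrite expr2 mulrA -[X in _ * X * _ = _](powRr1 (ltW Kn0)) -powRD.
    by congr (_ `^ _ * _); rewrite /g; field; rewrite gt_eqF.
  by apply/implyP => _; rewrite gt_eqF.
have e_pow : e `^ (2^-1 * g) * e = e `^ a.
  rewrite mulrC (_ : 2^-1 * g = a - 1) ?mulr_powRB1 //.
    by rewrite /a divr_gt0 ?mulr_gt0 //; lra.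
  by rewrite /g /a; field; rewrite gt_eqF.
apply: le_trans (_ : (2 * Cn p Kn * (Kn `^ g * e `^ (2^-1 * g))) * (Kn ^+ 2 * e) <= _).
  apply: ler_pM => //; last by rewrite -KnE.
  by apply: le_trans dt_le _; apply: ler_wpM2l.
rewrite (_ : _ * _ = (2 * Cn p Kn * Kn `^ (1 / (p - 1))) * (Kn * e `^ a)); last first.
  transitivity (2 * Cn p Kn * (Kn `^ g * Kn ^+ 2) * (e `^ (2^-1 * g) * e)); first by ring.
  by rewrite Kn_pow e_pow; ring.
apply: ler_wpM2r; first by rewrite mulr_ge0 ?powR_ge0 ?ltW.
exact: Cn_mul_powR_le.
Qed.
End StepSize.

Section DiscretePLaplacian.
Variables (R : realType) (m : nat) (h : 'I_m -> R) (K : 'I_m -> 'I_m -> R).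
Hypothesis h_ge0 : forall i, 0 <= h i.
Hypothesis K_ge0 : forall i j, 0 <= K i j.
Implicit Types (p : R) (u v : 'I_m -> R).

Definition flux_diff p u v (i j : 'I_m) : R := Psi p (u j - u i) - Psi p (v j - v i).

Definition flux_energy p u v : R :=
  \sum_i \sum_j h i * h j * K i j * flux_diff p u v i j ^+ 2.

Lemma kernel_norm_ge0 : 0 <= kernel_norm h K.
Proof. exact: bigmax_ge_id. Qed.

Lemma kernel_row_le i : \sum_j h j * K i j <= kernel_norm h K.
Proof.
apply: le_trans (le_bigmax _ (fun i => \sum_j h j * `|K i j|) i).
by apply: ler_sum => j _; rewrite ger0_norm.
Qed.

Lemma sum_edge_le (F : 'I_m -> R) : (forall i, 0 <= F i) ->
  \sum_i \sum_j h i * h j * K i j * F i <= kernel_norm h K * \sum_i h i * F i.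
Proof.
move=> F0; rewrite mulr_sumr; apply: ler_sum => i _.
rewrite [X in X <= _](_ : _ = (\sum_j h j * K i j) * (h i * F i)).
  by rewrite ler_wpM2r ?mulr_ge0 ?kernel_row_le.
by rewrite mulr_suml; apply: eq_bigr => j _; ring.
Qed.

Lemma flux_diffC p u v i j : flux_diff p u v j i = - flux_diff p u v i j.
Proof. by rewrite /flux_diff -(opprB (u j) (u i)) -(opprB (v j) (v i)) !PsiN opprD. Qed.

Lemma plapB p u v i :
  plap p h K u i - plap p h K v i = - \sum_j h j * K i j * flux_diff p u v i j.
Proof. by rewrite /plap -opprD -sumrB; congr (- _); apply: eq_bigr => j _; rewrite -mulrBr. Qed.

Lemma plapB_sqr_le p u v :
  \sum_i h i * (plap p h K u i - plap p h K v i) ^+ 2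
  <= kernel_norm h K * flux_energy p u v.
Proof.
rewrite /flux_energy mulr_sumr; apply: ler_sum => i _.
rewrite plapB sqrrN.
have hK0 j : 0 <= h j * K i j by rewrite mulr_ge0.
apply: le_trans (ler_wpM2l (h_ge0 i) (sum_mul_sqr_le _ hK0)) _ => /=.
rewrite [X in _ <= _ * X](_ : _ = h i * \sum_j h j * K i j * flux_diff p u v i j ^+ 2); last first.
  by rewrite mulr_sumr; apply: eq_bigr => j _; ring.
rewrite mulrCA; apply: ler_wpM2r; last exact: kernel_row_le.
by rewrite mulr_ge0 ?sumr_ge0 // => j _; rewrite mulr_ge0 ?sqr_ge0.
Qed.

Hypothesis K_sym : forall i j, K i j = K j i.

Lemma sum_edge_sym (F : 'I_m -> 'I_m -> R) :
  \sum_i \sum_j h i * h j * K i j * F j i = \sum_i \sum_j h i * h j * K i j * F i j.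
Proof.
rewrite exchange_big /=; apply: eq_bigr => i _; apply: eq_bigr => j _.
by rewrite K_sym; ring.
Qed.

Lemma plapB_pairing p u v :
  2 * \sum_i h i * (u i - v i) * (plap p h K u i - plap p h K v i)
  = \sum_i \sum_j h i * h j * K i j * flux_diff p u v i j * ((u j - v j) - (u i - v i)).
Proof.
pose S (F : 'I_m -> 'I_m -> R) := \sum_i \sum_j h i * h j * K i j * F i j.
have LX : \sum_i h i * (u i - v i) * (plap p h K u i - plap p h K v i)
          = - S (fun i j => flux_diff p u v i j * (u i - v i)).
  rewrite -sumrN; apply: eq_bigr => i _; rewrite plapB mulrN mulr_sumr.
  by congr (- _); apply: eq_bigr => j _; ring.
have YX : S (fun i j => flux_diff p u v i j * (u j - v j))
          = - S (fun i j => flux_diff p u v i j * (u i - v i)).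
  rewrite /S; have /= -> := sum_edge_sym (fun i j => flux_diff p u v j i * (u i - v i)).
  rewrite -sumrN.
  by apply: eq_bigr => i _; rewrite -sumrN; apply: eq_bigr => j _; rewrite flux_diffC; ring.
have -> : \sum_i \sum_j h i * h j * K i j * flux_diff p u v i j * ((u j - v j) - (u i - v i))
    = S (fun i j => flux_diff p u v i j * (u j - v j))
      - S (fun i j => flux_diff p u v i j * (u i - v i)).
  rewrite /S -sumrB; apply: eq_bigr => i _; rewrite -sumrB.
  by apply: eq_bigr => j _; ring.
by rewrite LX YX; ring.
Qed.

Hypothesis h_sum1 : \sum_i h i = 1.

Lemma edge_mass_le : \sum_i \sum_j h i * h j * K i j <= kernel_norm h K.
Proof.
rewrite -[X in _ <= X]mulr1 -h_sum1 mulr_sumr; apply: ler_sum => i _.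
under eq_bigr do rewrite -mulrA.
by rewrite -mulr_sumr mulrC; apply: ler_wpM2r; rewrite ?kernel_row_le.
Qed.

Lemma flux_energy_le p u v : 1 < p <= 2 ->
  flux_energy p u v <= 8 * kernel_norm h K * (1 + 4 * \sum_i h i * (u i - v i) ^+ 2).
Proof.
move=> p12.
set w := fun i => u i - v i.
have w2_ge0 i : 0 <= w i ^+ 2 := sqr_ge0 _.
have edge_le i j :
    h i * h j * K i j * flux_diff p u v i j ^+ 2
    <= 8 * (h i * h j * K i j) + 16 * (h i * h j * K i j * w i ^+ 2)
       + 16 * (h i * h j * K i j * w j ^+ 2).
  have mu0 : 0 <= h i * h j * K i j by rewrite !mulr_ge0.
  apply: le_trans (ler_wpM2l mu0 (Psi_sub_sqr_le p12 _ _)) _.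
  have -> : u j - u i - (v j - v i) = w j - w i by rewrite /w; ring.
  have := sqr_ge0 (w i + w j); have := mulr_ge0 mu0 (sqr_ge0 (w i + w j)); nra.
apply: le_trans (ler_sum _ (fun i _ => ler_sum _ (fun j _ => edge_le i j))) _.
have -> : \sum_i \sum_j (8 * (h i * h j * K i j) + 16 * (h i * h j * K i j * w i ^+ 2)
                        + 16 * (h i * h j * K i j * w j ^+ 2))
    = 8 * (\sum_i \sum_j h i * h j * K i j)
      + 16 * (\sum_i \sum_j h i * h j * K i j * w i ^+ 2)
      + 16 * (\sum_i \sum_j h i * h j * K i j * w j ^+ 2).
  rewrite !mulr_sumr -!big_split; apply: eq_bigr => i _.
  by rewrite !mulr_sumr -!big_split.
have /= -> := sum_edge_sym (fun i j => w i ^+ 2).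
have := sum_edge_le w2_ge0; have := edge_mass_le; lra.
Qed.

Lemma plapB_pairing_ge p u v : 1 < p <= 2 -> 0 < kernel_norm h K ->
  2 `^ ((p - 2) / (p - 1)) * (kernel_norm h K
    * (flux_energy p u v / kernel_norm h K) `^ (p / (2 * (p - 1))))
  <= 2 * \sum_i h i * (u i - v i) * (plap p h K u i - plap p h K v i).
Proof.
move=> p12 Kn0; have /andP[p1 p2] := p12.
set a := p / (2 * (p - 1)).
have a1 : 1 <= a by rewrite /a ler_pdivlMr ?mulr_gt0 ?subr_gt0 //; lra.
pose mu (ij : 'I_m * 'I_m) := h ij.1 * h ij.2 * K ij.1 ij.2.
pose X (ij : 'I_m * 'I_m) := flux_diff p u v ij.1 ij.2 ^+ 2.
have mu0 ij : 0 <= mu ij by rewrite !mulr_ge0.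
have X0 ij : 0 <= X ij := sqr_ge0 _.
have mass : \sum_ij mu ij <= kernel_norm h K.
  by rewrite -(pair_big xpredT xpredT (fun i j => h i * h j * K i j)) edge_mass_le.
have := sum_powR_ge a1 Kn0 mu0 mass X0.
rewrite -(pair_big xpredT xpredT (fun i j => mu (i, j) * X (i, j))).
rewrite -(pair_big xpredT xpredT (fun i j => mu (i, j) * X (i, j) `^ a)) /= -/(flux_energy p u v).
move=> /(ler_wpM2l (powR_ge0 2 ((p - 2) / (p - 1)))) /le_trans; apply.
rewrite plapB_pairing mulr_sumr; apply: ler_sum => i _; rewrite mulr_sumr; apply: ler_sum => j _.
rewrite mulrCA -mulrA; apply: ler_wpM2l; first exact: mu0 (i, j).
have := Psi_sub_mul_ge p12 (u j - u i) (v j - v i).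
by rewrite (_ : u j - u i - (v j - v i) = u j - v j - (u i - v i)) //; ring.
Qed.

Lemma explicit_step_contracts p u v dt : 1 < p <= 2 -> 0 < dt ->
  dt <= 2 * Cn p (kernel_norm h K)
        * l2norm h (fun i => plap p h K u i - plap p h K v i) `^ ((2 - p) / (p - 1)) ->
  \sum_i h i * (u i - v i - dt * (plap p h K u i - plap p h K v i)) ^+ 2
  <= \sum_i h i * (u i - v i) ^+ 2.
Proof.
move=> p12 dt0 dt_le; have /andP[p1 _] := p12.
set D := fun i => plap p h K u i - plap p h K v i.
set Q := \sum_i h i * D i ^+ 2.
set A := \sum_i h i * (u i - v i) * D i.
have -> : \sum_i h i * (u i - v i - dt * D i) ^+ 2
          = \sum_i h i * (u i - v i) ^+ 2 - dt * (2 * A - dt * Q).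
  transitivity (\sum_i (h i * (u i - v i) ^+ 2 + (- (2 * dt)) * (h i * (u i - v i) * D i)
                        + dt ^+ 2 * (h i * D i ^+ 2))).
    by apply: eq_bigr => i _; ring.
  by rewrite !big_split /= -!mulr_sumr -/A -/Q; ring.
suff dtQ : dt * Q <= 2 * A.
  have : 0 <= dt * (2 * A - dt * Q) by rewrite mulr_ge0 ?subr_ge0 // ltW.
  lra.
(* For K = 0 the restriction degenerates to dt <= 0, as 0 `^ (1/(1-p)) = 0. *)
have Kn0 : 0 < kernel_norm h K.
  rewrite lt_neqAle kernel_norm_ge0 andbT; apply/negP => /eqP Kn_eq0.
  by move: dt_le; rewrite -Kn_eq0 Cn0 // mulr0 mul0r; lra.
apply: le_trans (plapB_pairing_ge u v p12 Kn0).
apply: step_size_mul_le => //; last exact: ltW.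
  by rewrite sumr_ge0 // => i _; rewrite mulr_ge0 ?sqr_ge0.
exact: plapB_sqr_le.
Qed.

Lemma plapB_sqr_le_l2 p u v : 1 < p <= 2 ->
  \sum_i h i * (plap p h K u i - plap p h K v i) ^+ 2
  <= 8 * kernel_norm h K ^+ 2 * (1 + 4 * \sum_i h i * (u i - v i) ^+ 2).
Proof.
move=> p12; apply: le_trans (plapB_sqr_le p u v) _.
rewrite expr2 -mulrA mulrCA -mulrA; apply: ler_wpM2l; first exact: kernel_norm_ge0.
by rewrite mulrA (mulrC _ 8); apply: flux_energy_le.
Qed.
End DiscretePLaplacian.

Section L2Norm.
Variable R : realType.

Lemma eq_l2norm m (h : 'I_m -> R) (v w : 'I_m -> R) : v =1 w -> l2norm h v = l2norm h w.
Proof. by move=> vw; rewrite /l2norm; under eq_bigr do rewrite vw. Qed.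

Lemma sqr_l2norm m (h : 'I_m -> R) (v : 'I_m -> R) : (forall i, 0 <= h i) ->
  l2norm h v ^+ 2 = \sum_i h i * v i ^+ 2.
Proof. by move=> h_ge0; rewrite sqr_sqrtr // sumr_ge0 // => i _; rewrite mulr_ge0 ?sqr_ge0. Qed.

Lemma l2normZ m (h : 'I_m -> R) c (v : 'I_m -> R) : (forall i, 0 <= h i) ->
  l2norm h (fun i => c * v i) = `|c| * l2norm h v.
Proof.
move=> h_ge0; rewrite /l2norm -sqrtr_sqr -sqrtrM ?sqr_ge0 // mulr_sumr.
by congr Num.sqrt; apply: eq_bigr => i _; ring.
Qed.

End L2Norm.

Section ExplicitScheme.
Variables (R : realType) (p : R) (m : nat) (h : 'I_m -> R) (K : 'I_m -> 'I_m -> R).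
Variables (f g ustar : 'I_m -> R) (t : nat -> R) (N : nat).
Hypothesis p12 : 1 < p <= 2.
Hypothesis h_ge0 : forall i, 0 <= h i.
Hypothesis h_sum1 : \sum_i h i = 1.
Hypothesis K_ge0 : forall i j, 0 <= K i j.
Hypothesis K_sym : forall i j, K i j = K j i.
Hypothesis ustar_eq : forall i, plap p h K ustar i = f i.
Hypothesis t_incr : forall k, (k < N)%N -> t k < t k.+1.
Hypothesis step_size : forall k, (k < N)%N ->
  tau t k <= 2 * Cn p (kernel_norm h K) *
    l2norm h (fun i => plap p h K (scheme p h K f g t k) i - f i) `^ ((2 - p) / (p - 1)).

Local Notation u := (scheme p h K f g t).

Lemma scheme_stable k : (k <= N)%N ->
  \sum_i h i * (u k i - ustar i) ^+ 2 <= \sum_i h i * (g i - ustar i) ^+ 2.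
Proof.
elim: k => [//|k IHk] kN; apply: le_trans (IHk (ltnW kN)).
have tau0 : 0 < tau t k by rewrite subr_gt0 t_incr.
have dt_le : tau t k <= 2 * Cn p (kernel_norm h K) *
    l2norm h (fun i => plap p h K (u k) i - plap p h K ustar i) `^ ((2 - p) / (p - 1)).
  by rewrite /l2norm; under eq_bigr do rewrite ustar_eq; exact: step_size.
have := explicit_step_contracts h_ge0 K_ge0 K_sym h_sum1 p12 tau0 dt_le.
suff -> : \sum_i h i * (u k.+1 i - ustar i) ^+ 2 = \sum_i h i
    * (u k i - ustar i - tau t k * (plap p h K (u k) i - plap p h K ustar i)) ^+ 2 by [].
by apply: eq_bigr => i _; rewrite /= -ustar_eq; congr (_ * _ ^+ 2); ring.
Qed.

Lemma scheme_residual_le k : (k <= N)%N ->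
  l2norm h (fun i => plap p h K (u k) i - f i) ^+ 2
  <= 8 * kernel_norm h K ^+ 2 * (1 + 4 * l2norm h (fun i => g i - ustar i) ^+ 2).
Proof.
move=> kN; rewrite !sqr_l2norm //; under eq_bigr do rewrite -ustar_eq.
apply: le_trans (plapB_sqr_le_l2 h_ge0 K_ge0 K_sym h_sum1 _ _ p12) _.
apply: ler_wpM2l; first by rewrite mulr_ge0 ?sqr_ge0.
by rewrite lerD2l ler_wpM2l // scheme_stable.
Qed.
End ExplicitScheme.

Section Interpolation.
Variable R : realType.

Lemma u_tilde_sub_u_bar m (u : nat -> 'I_m -> R) t k s i : t k < t k.+1 ->
  u_tilde u t k s i - u_bar u k i = (s - t k) / tau t k * (u k.+1 i - u k i).
Proof.
move=> t_lt; rewrite /u_tilde /u_bar /tau; field.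
by rewrite subr_eq0 gt_eqF.
Qed.

Lemma tau_le_taumax (t : nat -> R) N k : (k < N)%N -> tau t k <= taumax t N.
Proof. by move=> kN; apply: (le_bigmax _ (fun k : 'I_N => tau t k) (Ordinal kN)). Qed.
End Interpolation.

Unset Implicit Arguments. Set Strict Implicit.

Theorem lemma6p6 (R : realType) (p : R)
  (m : nat -> nat)
  (h : forall n, 'I_(m n) -> R)
  (K : forall n, 'I_(m n) -> 'I_(m n) -> R)
  (f g ustar : forall n, 'I_(m n) -> R) :
  1 < p <= 2 ->
  (* cells: positive measures partitioning Omega = [0,1]^d *)
  (forall n i, 0 < h n i) ->
  (forall n, \sum_(i < m n) h n i = 1) ->
  (* kernel nonnegative and symmetric *)
  (forall n i j, 0 <= K n i j) ->
  (forall n i j, K n i j = K n j i) ->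
  (* sup_n ||I_n K||_{L^{infty,1}} < +oo *)
  (exists M : R, forall n, kernel_norm (h n) (K n) <= M) ->
  (* stationary solution u* of Delta_p^K u* = f *)
  (forall n i, plap p (h n) (K n) (ustar n) i = f n i) ->
  (exists M : R, forall n,
      l2norm (h n) (fun i => g n i - ustar n i) <= M) ->
  exists C : R, 0 < C /\
    forall (N : nat) (T : R) (t : nat -> R),
      t 0%N = 0 -> t N = T ->
      (forall k, (k < N)%N -> t k < t k.+1) ->
      (* step-size restriction, for every n *)
      (forall n k, (k < N)%N ->
         tau t k <= 2 * Cn p (kernel_norm (h n) (K n)) *
           (l2norm (h n)
              (fun i => plap p (h n) (K n)
                          (scheme p (h n) (K n) (f n) (g n) t k) i - f n i))
             `^ ((2 - p) / (p - 1))) ->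
      forall n k s, (k < N)%N -> t k < s <= t k.+1 ->
        l2norm (h n)
          (fun i => u_tilde (scheme p (h n) (K n) (f n) (g n) t) t k s i
                    - u_bar (scheme p (h n) (K n) (f n) (g n) t) k i)
        <= C * taumax t N.
Proof.
move=> p12 h_gt0 h_sum1 K_ge0 K_sym [MK KnM] ustar_eq [Mg gM].
have h_ge0 n i : 0 <= h n i := ltW (h_gt0 n i).
pose B := 8 * MK ^+ 2 * (1 + 4 * Mg ^+ 2).
exists (Num.sqrt B + 1); split; first by have := sqrtr_ge0 B; lra.
move=> N T t _ _ t_incr step_size n k s kN /andP[tk_s s_tk1].
set u := scheme p (h n) (K n) (f n) (g n) t.
have tau0 : 0 < tau t k by rewrite subr_gt0 t_incr.
have diffE i : u_tilde u t k s i - u_bar u k i = - (s - t k) * (plap p (h n) (K n) (u k) i - f n i).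
  by rewrite u_tilde_sub_u_bar ?t_incr // /u /=; field; rewrite gt_eqF.
have st0 : 0 <= s - t k by rewrite subr_ge0 ltW.
rewrite (eq_l2norm _ diffE) l2normZ // normrN ger0_norm // [X in _ <= X]mulrC.
apply: ler_pM => //; first exact: sqrtr_ge0.
  by apply: le_trans (tau_le_taumax t kN); rewrite /tau; lra.
suff : l2norm (h n) (fun i => plap p (h n) (K n) (u k) i - f n i) <= Num.sqrt B by lra.
rewrite -[l2norm _ _]ger0_norm ?sqrtr_ge0 // -sqrtr_sqr; apply: ler_wsqrtr.
apply: le_trans (scheme_residual_le p12 (h_ge0 n) (h_sum1 n) (K_ge0 n) (K_sym n) (ustar_eq n)
                   t_incr (step_size n) (ltnW kN)) _.
have Kn0 := kernel_norm_ge0 (h n) (K n); have KnMn := KnM n.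
have L0 := sqrtr_ge0 (\sum_i h n i * (g n i - ustar n i) ^+ 2); have LMg := gM n.
rewrite /B; apply: ler_pM; rewrite ?mulr_ge0 ?addr_ge0 ?sqr_ge0 //; rewrite /l2norm in LMg *; nra.
Qed.
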